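(* For every $\rho\in(0,\tfrac12)$, the scalar equation $x'=-\bigl(x+\tfrac12\bigr)^2$ has the conditional Lipschitz shadowing property in $[-\rho,\infty)$.
   Context: For continuous $g\colon[0,\infty)\times\mathbb R\to\mathbb R$ and $\tau\in(0,\infty]$, a pseudosolution of $x'=g(t,x)$ on $[0,\tau)$ is a $C^1$ map $y\colon[0,\tau)\to\mathbb R$ with $\sigma_y:=\sup_{0\le t<\tau}|y'(t)-g(t,y(t))|<\infty$. The equation has the conditional Lipschitz shadowing property in $H\neq\emptyset$ if there exist $\varepsilon_0,\kappa>0$ such that whenever $0<\varepsilon\le\varepsilon_0$ and $y$ is a pseudosolution on $[0,\tau)$ ($\tau\in(0,\infty]$) with $\sigma_y\le\varepsilon$ and $y(t)\in H$ for all $t\in[0,\tau)$, there is a solution $x$ of the equation defined on $[0,\tau)$ with $\sup_{0\le t<\tau}|x(t)-y(t)|\le\kappa\varepsilon$. *)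

From Stdlib Require Import Reals.
From Coquelicot Require Import Coquelicot.
Open Scope R_scope.

Definition in_I (tau : Rbar) (t : R) : Prop := 0 <= t /\ Rbar_lt t tau.

Definition deriv_on (tau : Rbar) (y dy : R -> R) : Prop :=
  forall t, in_I tau t ->
    filterlim (fun s => (y s - y t) / (s - t))
      (within (fun s => in_I tau s /\ s <> t) (locally t)) (locally (dy t)).

Definition cont_on (tau : Rbar) (f : R -> R) : Prop :=
  forall t, in_I tau t ->
    filterlim f (within (in_I tau) (locally t)) (locally (f t)).

Definition C1_on (tau : Rbar) (y dy : R -> R) : Prop :=
  deriv_on tau y dy /\ cont_on tau dy.

Definition pseudosolution (g : R -> R -> R) (tau : Rbar) (y dy : R -> R) : Prop :=
  C1_on tau y dy /\
  exists M : R, forall t, in_I tau t -> Rabs (dy t - g t (y t)) <= M.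

Definition defect_le (g : R -> R -> R) (tau : Rbar) (y dy : R -> R) (eps : R) : Prop :=
  forall t, in_I tau t -> Rabs (dy t - g t (y t)) <= eps.

Definition solution_on (g : R -> R -> R) (tau : Rbar) (x : R -> R) : Prop :=
  deriv_on tau x (fun t => g t (x t)).

Definition cond_Lip_shadowing (g : R -> R -> R) (H : R -> Prop) : Prop :=
  (exists y0, H y0) /\
  exists eps0 kappa : R, 0 < eps0 /\ 0 < kappa /\
    forall (eps : R) (tau : Rbar) (y dy : R -> R),
      0 < eps -> eps <= eps0 -> Rbar_lt 0 tau ->
      pseudosolution g tau y dy ->
      defect_le g tau y dy eps ->
      (forall t, in_I tau t -> H (y t)) ->
      exists x : R -> R, solution_on g tau x /\
        forall t, in_I tau t -> Rabs (x t - y t) <= kappa * eps.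

(* The solution [x] of [x' = -(x + 1/2)^2] with [x(0) = y(0)] shadows [y].
   As long as [y] stays in [[-rho, oo)] and [x + 1/2 > 0], the vector field is
   one-sided Lipschitz with constant [-(1/2 - rho)] along the pair [(x, y)], so
   [w = y - x] satisfies [w w' <= eps |w| - (1/2 - rho) w^2]: the derivative of
   [w] points inwards as soon as [|w| > eps / (1/2 - rho)], and since [w(0) = 0]
   a barrier argument keeps [|y - x| <= eps / (1/2 - rho)] on all of [[0, tau)]. *)
From Stdlib Require Import Reals Lra.
From Coquelicot Require Import Coquelicot.
Open Scope R_scope.

Lemma ball_Rabs (x e y : R) : ball x e y <-> Rabs (y - x) < e.
Proof. reflexivity. Qed.

Lemma in_I_le (T : Rbar) (s t : R) : 0 <= s -> s <= t -> in_I T t -> in_I T s.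
Proof.
  intros Hs Hst [_ Ht]; split; [exact Hs|].
  exact (Rbar_le_lt_trans s t T Hst Ht).
Qed.

Lemma in_I_interior (T : Rbar) (t : R) : 0 < t -> Rbar_lt t T ->
  exists d, 0 < d /\ forall s, Rabs (s - t) < d -> in_I T s.
Proof.
  intros Ht HtT.
  assert (Hm : exists m, 0 < m /\ forall s, s < t + m -> Rbar_lt s T).
  { destruct T as [b| |]; simpl in HtT |- *; try contradiction.
    - exists (b - t); split; intros; lra.
    - exists 1; split; auto; lra. }
  destruct Hm as [m [Hm HmT]].
  exists (Rmin t m); split; [now apply Rmin_pos|].
  intros s Hs; apply Rabs_def2 in Hs.
  pose proof (Rmin_l t m); pose proof (Rmin_r t m).
  split; [lra|]. apply HmT; lra.
Qed.

Lemma deriv_on_minus (T : Rbar) (f df g dg : R -> R) :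
  deriv_on T f df -> deriv_on T g dg ->
  deriv_on T (fun t => f t - g t) (fun t => df t - dg t).
Proof.
  intros Hf Hg t Ht.
  apply filterlim_ext with
    (fun s => (f s - f t) / (s - t) + - ((g s - g t) / (s - t))).
  { intros s; unfold Rdiv; ring. }
  eapply filterlim_comp_2 with (h := Rplus);
    [exact (Hf t Ht) | eapply filterlim_comp; [exact (Hg t Ht)|] |].
  - exact (filterlim_opp (dg t)).
  - exact (filterlim_plus (df t) (- dg t)).
Qed.

Lemma deriv_on_opp (T : Rbar) (f df : R -> R) :
  deriv_on T f df -> deriv_on T (fun t => - f t) (fun t => - df t).
Proof.
  intros Hf t Ht.
  apply filterlim_ext with (fun s => - ((f s - f t) / (s - t))).
  { intros s; unfold Rdiv; ring. }
  eapply filterlim_comp; [exact (Hf t Ht)|].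
  exact (filterlim_opp (df t)).
Qed.

Lemma derivable_pt_lim_deriv_on (T : Rbar) (f df : R -> R) :
  (forall t, in_I T t -> derivable_pt_lim f t (df t)) -> deriv_on T f df.
Proof.
  intros Hf t Ht P [e HP].
  destruct (Hf t Ht e (cond_pos e)) as [d Hd].
  exists d; intros s Hs [_ Hst]; apply HP.
  assert (Hh : s - t <> 0) by lra.
  specialize (Hd (s - t) Hh Hs).
  assert (Hs' : t + (s - t) = s :> R) by ring.
  rewrite Hs' in Hd; exact Hd.
Qed.

Lemma deriv_on_derivable_pt_lim (T : Rbar) (f df : R -> R) (t : R) :
  deriv_on T f df -> 0 < t -> Rbar_lt t T -> derivable_pt_lim f t (df t).
Proof.
  intros Hf Ht HtT e He.
  destruct (in_I_interior T t Ht HtT) as [m [Hm HmI]].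
  assert (HtI : in_I T t) by (split; [lra|exact HtT]).
  destruct (Hf t HtI (ball (df t) e) (locally_ball _ (mkposreal e He)))
    as [d Hd].
  assert (Hdm : 0 < Rmin d m) by (apply Rmin_pos; [apply cond_pos|exact Hm]).
  exists (mkposreal _ Hdm); intros h Hh0 Hh; simpl in Hh.
  assert (Hball : ball t d (t + h)).
  { apply ball_Rabs, Rlt_le_trans with (Rmin d m); [|apply Rmin_l].
    now replace (t + h - t) with h by ring. }
  assert (Hdom : in_I T (t + h) /\ t + h <> t).
  { split; [apply HmI|lra].
    apply Rlt_le_trans with (Rmin d m); [|apply Rmin_r].
    now replace (t + h - t) with h by ring. }
  specialize (Hd (t + h) Hball Hdom).
  now replace (t + h - t) with h in Hd by ring.
Qed.

Lemma deriv_on_cont_on (T : Rbar) (f df : R -> R) :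
  deriv_on T f df -> cont_on T f.
Proof.
  intros Hf t Ht P [e HP].
  destruct (Hf t Ht (ball (df t) 1) (locally_ball _ (mkposreal 1 Rlt_0_1)))
    as [d Hd].
  set (L := Rabs (df t) + 1).
  assert (HL : 0 < L) by (pose proof (Rabs_pos (df t)); unfold L; lra).
  assert (Hr : 0 < Rmin d (e / L))
    by (apply Rmin_pos; [apply cond_pos|apply Rdiv_lt_0_compat; [apply cond_pos|exact HL]]).
  exists (mkposreal _ Hr); intros s Hs HsI; apply HP; simpl in Hs.
  destruct (Req_dec s t) as [->|Hst].
  { apply ball_center. }
  assert (Hq : Rabs ((f s - f t) / (s - t)) <= L).
  { specialize (Hd s (Rlt_le_trans _ _ _ Hs (Rmin_l _ _)) (conj HsI Hst)).
    change (Rabs ((f s - f t) / (s - t) - df t) < 1) in Hd.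
    pose proof (Rabs_triang_inv ((f s - f t) / (s - t)) (df t)).
    unfold L; lra. }
  change (Rabs (f s - f t) < e).
  replace (f s - f t) with ((f s - f t) / (s - t) * (s - t)) by (field; lra).
  rewrite Rabs_mult.
  apply Rle_lt_trans with (L * Rabs (s - t)).
  { apply Rmult_le_compat_r; [apply Rabs_pos|exact Hq]. }
  apply Rlt_le_trans with (L * (e / L)).
  { apply Rmult_lt_compat_l; [exact HL|].
    exact (Rlt_le_trans _ _ _ Hs (Rmin_r _ _)). }
  right; field; lra.
Qed.

Lemma cont_on_near (T : Rbar) (f : R -> R) (t : R) :
  cont_on T f -> in_I T t -> forall e, 0 < e ->
  exists d, 0 < d /\ forall s, in_I T s -> Rabs (s - t) < d -> Rabs (f s - f t) < e.
Proof.
  intros Hf Ht e He.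
  destruct (Hf t Ht (ball (f t) e) (locally_ball _ (mkposreal e He))) as [d Hd].
  exists d; split; [apply cond_pos|].
  intros s Hs Hst; exact (Hd s Hst Hs).
Qed.

Lemma last_exit (T : Rbar) (w : R -> R) (K t1 : R) :
  cont_on T w -> in_I T t1 -> w 0 <= K -> K < w t1 ->
  exists s, 0 <= s < t1 /\ w s <= K /\ forall r, s < r <= t1 -> K < w r.
Proof.
  intros Hw Ht1 H0 H1.
  set (E := fun t => 0 <= t <= t1 /\ w t <= K).
  assert (HE0 : E 0) by (split; [split; [lra|apply Ht1]|exact H0]).
  assert (HEb : bound E) by (exists t1; intros r [[_ Hr] _]; exact Hr).
  destruct (completeness E HEb (ex_intro _ 0 HE0)) as [s [Hub Hlub]].
  assert (Hs0 : 0 <= s) by exact (Hub 0 HE0).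
  assert (Hst1 : s <= t1) by (apply Hlub; intros r [[_ Hr] _]; exact Hr).
  assert (HsI : in_I T s) by exact (in_I_le T s t1 Hs0 Hst1 Ht1).
  assert (Hws : w s <= K).
  { destruct (Rle_lt_dec (w s) K) as [|Hgt]; [assumption|exfalso].
    destruct (Req_dec s 0) as [->|Hsn0]; [lra|].
    (* Points of [E] accumulate at [s] from the left, where [w] is close to [w s > K]. *)
    destruct (cont_on_near T w s Hw HsI (w s - K)) as [d [Hd Hnear]]; [lra|].
    set (s2 := s - Rmin d s / 2).
    assert (Hm : 0 < Rmin d s <= d /\ Rmin d s <= s)
      by (split; [split; [apply Rmin_pos; lra|apply Rmin_l]|apply Rmin_r]).
    assert (Hub2 : is_upper_bound E s2).
    { intros r Hr; destruct (Rle_lt_dec r s2) as [|Hr2]; [assumption|exfalso].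
      pose proof (Hub r Hr) as Hrs; destruct Hr as [[Hr0 Hrt1] HrK].
      assert (Hdist : Rabs (r - s) < d) by (apply Rabs_def1; unfold s2 in Hr2; lra).
      specialize (Hnear r (in_I_le T r t1 Hr0 Hrt1 Ht1) Hdist).
      apply Rabs_def2 in Hnear; lra. }
    specialize (Hlub s2 Hub2); unfold s2 in Hlub; lra. }
  exists s; split; [split; [exact Hs0|]|split; [exact Hws|]].
  - destruct (Req_dec s t1) as [->|]; lra.
  - intros r [Hsr Hrt1]; destruct (Rle_lt_dec (w r) K) as [HrK|]; [|assumption].
    assert (HEr : E r) by (split; [lra|exact HrK]).
    specialize (Hub r HEr); lra.
Qed.

Lemma deriv_on_upper_barrier (T : Rbar) (w dw : R -> R) (K : R) :
  deriv_on T w dw -> w 0 <= K ->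
  (forall t, in_I T t -> K < w t -> dw t < 0) ->
  forall t, in_I T t -> w t <= K.
Proof.
  intros Hw H0 Hdown t1 Ht1.
  destruct (Rle_lt_dec (w t1) K) as [|H1]; [assumption|exfalso].
  pose proof (deriv_on_cont_on T w dw Hw) as Hc.
  destruct (last_exit T w K t1 Hc Ht1 H0 H1) as [s [Hs [HwsK Habove]]].
  assert (HsI : in_I T s) by exact (in_I_le T s t1 (proj1 Hs) (Rlt_le _ _ (proj2 Hs)) Ht1).
  destruct (cont_on_near T w s Hc HsI (w t1 - w s)) as [d [Hd Hnear]]; [lra|].
  set (s' := s + Rmin d (t1 - s) / 2).
  assert (Hm : 0 < Rmin d (t1 - s) <= d /\ Rmin d (t1 - s) <= t1 - s)
    by (split; [split; [apply Rmin_pos; lra|apply Rmin_l]|apply Rmin_r]).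
  assert (Hs'I : in_I T s')
    by (apply (in_I_le T s' t1); [unfold s'; lra|unfold s'; lra|exact Ht1]).
  assert (Hws' : w s' < w t1).
  { assert (Hdist : Rabs (s' - s) < d) by (apply Rabs_def1; unfold s'; lra).
    specialize (Hnear s' Hs'I Hdist); apply Rabs_def2 in Hnear; lra. }
  destruct (MVT_cor2 w dw s' t1) as [c [Hmvt Hc']]; [unfold s'; lra| |].
  { intros c Hc'; apply (deriv_on_derivable_pt_lim T); [exact Hw| |].
    - unfold s' in Hc'; lra.
    - apply (in_I_le T c t1); [unfold s' in Hc'; lra|lra|exact Ht1]. }
  assert (Hdwc : dw c < 0).
  { apply Hdown; [apply (in_I_le T c t1); [unfold s' in Hc'; lra|lra|exact Ht1]|].
    apply Habove; unfold s' in Hc'; lra. }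
  assert (dw c * (t1 - s') < 0) by (apply Rmult_neg_pos; lra).
  lra.
Qed.

Lemma deriv_on_abs_barrier (T : Rbar) (w dw : R -> R) (K : R) :
  deriv_on T w dw -> Rabs (w 0) <= K ->
  (forall t, in_I T t -> K < w t -> dw t < 0) ->
  (forall t, in_I T t -> w t < - K -> 0 < dw t) ->
  forall t, in_I T t -> Rabs (w t) <= K.
Proof.
  intros Hw H0 Hdown Hup t Ht; apply Rabs_le_between in H0.
  apply Rabs_le; split.
  - enough (- w t <= K) by lra.
    apply (deriv_on_upper_barrier T _ _ K (deriv_on_opp T w dw Hw)); [lra| |exact Ht].
    intros r Hr HrK; specialize (Hup r Hr); lra.
  - exact (deriv_on_upper_barrier T w dw K Hw (proj2 H0) Hdown t Ht).
Qed.

Lemma riccati_solution (u0 t : R) : 1 + u0 * t <> 0 ->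
  derivable_pt_lim (fun t => u0 / (1 + u0 * t) - 1/2) t
    (- ((u0 / (1 + u0 * t) - 1/2) + 1/2)^2).
Proof.
  intros Ht; apply is_derive_Reals.
  auto_derive; [exact Ht|].
  field; exact Ht.
Qed.

Lemma riccati_one_sided (c x y : R) : c <= y + 1/2 -> 0 <= x + 1/2 ->
  (- (y + 1/2)^2 - - (x + 1/2)^2) * (y - x) <= - c * (y - x)^2.
Proof.
  intros Hy Hx.
  replace ((- (y + 1/2)^2 - - (x + 1/2)^2) * (y - x))
    with (- (y + x + 1) * (y - x)^2) by field.
  pose proof (pow2_ge_0 (y - x)); nra.
Qed.

Lemma dissipative_inward (c eps a b w : R) : 0 < c ->
  Rabs a <= eps -> b * w <= - c * w^2 -> eps / c < w -> a + b < 0.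
Proof.
  intros Hc Ha Hb Hw.
  apply Rabs_le_between in Ha.
  assert (Hcw : eps < c * w).
  { apply Rmult_lt_compat_l with (r := c) in Hw; [|exact Hc].
    now replace (c * (eps / c)) with eps in Hw by (field; lra). }
  assert (Hpos : 0 < w) by nra.
  assert (b <= - c * w) by nra.
  lra.
Qed.

Lemma one_sided_lipschitz_shadowing (g : R -> R -> R) (T : Rbar) (c eps : R)
    (x y dy : R -> R) :
  0 < c -> 0 <= eps ->
  solution_on g T x -> deriv_on T y dy -> x 0 = y 0 ->
  defect_le g T y dy eps ->
  (forall t, in_I T t -> (g t (y t) - g t (x t)) * (y t - x t) <= - c * (y t - x t)^2) ->
  forall t, in_I T t -> Rabs (x t - y t) <= eps / c.
Proof.
  intros Hc Heps Hx Hy H0 Hdef Hg t Ht; rewrite Rabs_minus_sym.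
  apply (deriv_on_abs_barrier T _ _ _ (deriv_on_minus T _ _ _ _ Hy Hx)); [| | |exact Ht].
  - rewrite H0, Rminus_diag, Rabs_R0; apply Rdiv_le_0_compat; lra.
  - intros r Hr Hw.
    replace (dy r - g r (x r))
      with ((dy r - g r (y r)) + (g r (y r) - g r (x r))) by ring.
    exact (dissipative_inward c eps _ _ _ Hc (Hdef r Hr) (Hg r Hr) Hw).
  - intros r Hr Hw.
    enough (- (dy r - g r (y r)) + - (g r (y r) - g r (x r)) < 0) by lra.
    apply (dissipative_inward c eps _ _ (- (y r - x r)) Hc); [| |lra].
    + rewrite Rabs_Ropp; exact (Hdef r Hr).
    + pose proof (Hg r Hr); nra.
Qed.

Theorem mainTheorem11 :
  forall rho : R, 0 < rho -> rho < 1/2 ->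
    cond_Lip_shadowing (fun (_ : R) (x : R) => - (x + 1/2)^2)
                       (fun x => - rho <= x).
Proof.
  intros rho Hrho0 Hrho1; split; [exists 0; lra|].
  set (c := 1/2 - rho); assert (Hc : 0 < c) by (unfold c; lra).
  exists 1, (1 / c); split; [lra|split; [apply Rdiv_lt_0_compat; lra|]].
  intros eps tau y dy Heps _ Htau [[Hy _] _] Hdef HH.
  assert (HyH : forall t, in_I tau t -> c <= y t + 1/2)
    by (intros t Ht; specialize (HH t Ht); unfold c; lra).
  set (u0 := y 0 + 1/2).
  assert (H0I : in_I tau 0) by (split; [lra|exact Htau]).
  assert (Hu0 : 0 < u0) by (specialize (HyH 0 H0I); unfold u0; lra).
  set (x := fun t => u0 / (1 + u0 * t) - 1/2).
  assert (Hxpos : forall t, 0 <= t -> 0 <= x t + 1/2).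
  { intros t Ht; unfold x.
    replace (u0 / (1 + u0 * t) - 1/2 + 1/2) with (u0 / (1 + u0 * t)) by ring.
    apply Rlt_le, Rdiv_lt_0_compat; nra. }
  assert (Hx : solution_on (fun _ x => - (x + 1/2)^2) tau x).
  { apply derivable_pt_lim_deriv_on; intros t [Ht _]; apply riccati_solution; nra. }
  exists x; split; [exact Hx|].
  replace (1 / c * eps) with (eps / c) by (field; lra).
  apply (one_sided_lipschitz_shadowing _ tau c eps x y dy Hc (Rlt_le _ _ Heps) Hx Hy);
    [unfold x, u0; field; lra|exact Hdef|].
  intros t Ht; exact (riccati_one_sided c (x t) (y t) (HyH t Ht) (Hxpos t (proj1 Ht))).
Qed.
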